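(* Every maximal (with respect to inclusion) thin subset of $\mathbb{Z}_2^\omega$ is neither Borel nor meager.
   Context: $\mathbb{Z}_2^\omega$ is the Cantor cube of infinite binary sequences indexed by $\omega=\{0,1,2,\dots\}$, with the product (Tychonoff) topology. A set $T\subseteq\mathbb{Z}_2^\omega$ is thin if for every $n\in\omega$ the map $x\mapsto x|_{\omega\setminus\{n\}}$ is injective on $T$ (equivalently, no two distinct elements of $T$ differ in exactly one coordinate). *)

From HB Require Import structures.
From mathcomp Require Import all_boot all_order all_algebra.
From mathcomp Require Import all_classical all_reals all_analysis.
Set Implicit Arguments. Unset Strict Implicit. Unset Printing Implicit Defensive.
Local Open Scope classical_set_scope.

(* The Cantor cube Z_2^omega = bool^nat with the product topology is
   mathcomp-analysis' [cantor_space] (= prod_topology (fun _ : nat => bool)). *)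

Definition borel (T : topologicalType) (A : set T) : Prop :=
  <<s [set U : set T | open U] >> A.

Definition nowhere_dense (T : topologicalType) (A : set T) : Prop :=
  (closure A)^° = set0.

Definition meager (T : topologicalType) (A : set T) : Prop :=
  exists F : (set T)^nat, (forall n, nowhere_dense (F n)) /\ A `<=` \bigcup_n F n.

Definition thin (X : set cantor_space) : Prop :=
  forall (n : nat) (x y : cantor_space), X x -> X y ->
    (forall m : nat, m <> n -> x m = y m) -> x = y.

Definition maximal_thin (X : set cantor_space) : Prop :=
  thin X /\ forall Y : set cantor_space, thin Y -> X `<=` Y -> Y = X.

From mathcomp Require Import all_boot all_order all_algebra.
From mathcomp Require Import all_classical all_reals all_analysis.
Local Open Scope classical_set_scope.

(* A point outside a maximal thin set X differs in exactly one coordinate n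
   from some point of X, since otherwise it could be added to X. So the Cantor
   cube is covered by X and its images under the coordinate flips, which are
   homeomorphisms; by the Baire category theorem X is not meager. A Borel set
   has the Baire property, so X would agree with an open set U up to a meager
   set, and U is nonempty because X is not meager. U contains a basic cylinder
   that is mapped onto itself by the flip of a coordinate n not fixed by the
   cylinder; by Baire again some point z of the cylinder has both z and its
   flip in X, two points of X differing only at n, which contradicts
   thinness. *)

Section meager_sets.
Context {T : topologicalType}.
Implicit Types A B U : set T.

Lemma nowhere_dense0 : nowhere_dense (@set0 T).
Proof. by rewrite /nowhere_dense closure0 interior0. Qed.

Lemma nowhere_dense_frontier [U] : open U -> nowhere_dense (closure U `\` U).
Proof.
move=> oU; have cD : closed (closure U `\` U).
  rewrite setDE; apply: closedI; first exact: closed_closure.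
  exact: open_closedC.
rewrite /nowhere_dense -(closure_id _).1 // setDE interiorI interiorC.
by rewrite -subset0 => x [/interior_subset].
Qed.

Lemma meagerS [A B] : A `<=` B -> meager B -> meager A.
Proof.
by move=> AB [F [ndF BF]]; exists F; split => //; exact: subset_trans BF.
Qed.

Lemma nowhere_dense_meager [A] : nowhere_dense A -> meager A.
Proof. by move=> ndA; exists (fun=> A); split => // x Ax; exists 0%N. Qed.

Lemma meager0 : meager (@set0 T).
Proof. exact/nowhere_dense_meager/nowhere_dense0. Qed.

Lemma meager_bigcup [A : (set T)^nat] :
  (forall n, meager (A n)) -> meager (\bigcup_n A n).
Proof.
move=> /choice[F mF].
pose G k := if @unpickle (nat * nat)%type k is Some (n, m) then F n m else set0.
exists G; split.
  move=> k; rewrite /G; case: unpickle => [[n m]|]; last exact: nowhere_dense0.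
  exact: (mF n).1.
move=> x [n _ /(mF n).2[m _ Fx]].
by exists (pickle (n, m)) => //; rewrite /G pickleK.
Qed.

Lemma meagerU [A B] : meager A -> meager B -> meager (A `|` B).
Proof.
move=> mA mB; apply: (@meagerS _ (\bigcup_n if n is 0 then A else B)).
  by move=> x [Ax|Bx]; [exists 0%N | exists 1%N].
by apply: meager_bigcup => -[].
Qed.

Definition baire_property A := exists U, open U /\ meager (A `+` U).

Lemma baire_property_sigma_algebra : sigma_algebra setT baire_property.
Proof.
split.
- by exists set0; rewrite setYK; split; [exact: open0 | exact: meager0].
- move=> A [U [oU mAU]]; exists (~` closure U); split.
    by rewrite openC; exact: closed_closure.
  have mfr := nowhere_dense_meager (nowhere_dense_frontier oU).
  apply: (meagerS _ (meagerU mAU mfr)).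
  move=> x [[[_ nAx] /contrapT clUx]|[nclUx nTAx]].
    by have [Ux|nUx] := pselect (U x); [left; right | right; split].
  have Ax : A x by apply: contrapT => nAx; exact: nTAx.
  by left; left; split => // /subset_closure.
- move=> A /choice[U AU]; exists (\bigcup_n U n); split.
    by apply: bigcup_open => n _; exact: (AU n).1.
  apply: (@meagerS _ (\bigcup_n (A n `+` U n))); last first.
    by apply: meager_bigcup => n; exact: (AU n).2.
  move=> x [[[n _ Ax] nUx]|[[n _ Ux] nAx]].
    by exists n => //; left; split => // Ux; apply: nUx; exists n.
  by exists n => //; right; split => // Ax; apply: nAx; exists n.
Qed.

Lemma borel_baire_property A : borel A -> baire_property A.
Proof.
apply; split; first exact: baire_property_sigma_algebra.
by move=> U oU; exists U; rewrite setYK; split; [|exact: meager0].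
Qed.

End meager_sets.

Section homeomorphism_meager.
Context {S T : topologicalType} {f : S -> T} {g : T -> S}.
Hypotheses (f_cont : continuous f) (g_cont : continuous g).
Hypotheses (fK : cancel f g) (gK : cancel g f).

Lemma nowhere_dense_preimage [A : set T] :
  nowhere_dense A -> nowhere_dense (f @^-1` A).
Proof.
move=> ndA; have clf : closure (f @^-1` A) `<=` f @^-1` closure A.
  rewrite [X in _ `<=` X](closure_id _).1; last first.
    by apply: (continuous_closedP f).1 => //; exact: closed_closure.
  by apply: closureS; apply: preimage_subset; exact: subset_closure.
rewrite /nowhere_dense -subset0 => x /(interiorS clf) fAx.
suff : (closure A)° (f x) by rewrite ndA.
have : nbhs (f x) (g @^-1` (f @^-1` closure A)) by apply: g_cont; rewrite fK.
by apply: filterS => y /=; rewrite gK.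
Qed.

Lemma meager_preimage [A : set T] : meager A -> meager (f @^-1` A).
Proof.
move=> [F [ndF AF]]; exists (fun n => f @^-1` F n); split.
  by move=> n; exact: nowhere_dense_preimage.
by move=> x /AF[n _ Fx]; exists n.
Qed.

End homeomorphism_meager.

Definition cylinder (x : cantor_space) (k : nat) : set cantor_space :=
  [set y | forall i, (i < k)%N -> y i = x i].

Lemma cylinderS [x k k'] : (k <= k')%N -> cylinder x k' `<=` cylinder x k.
Proof. by move=> kk' y xy i ik; apply: xy; exact: leq_trans kk'. Qed.

Lemma cylinder_sub [x y k k'] :
  cylinder x k y -> (k <= k')%N -> cylinder y k' `<=` cylinder x k.
Proof.
by move=> xy kk' z yz i ik; rewrite (yz i (leq_trans ik kk')) (xy i ik).
Qed.

Lemma cylinder_nbhs x k : nbhs x (cylinder x k).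
Proof.
elim: k => [|k IH]; first by apply: filterS filterT => y _ i; rewrite ltn0.
have xk : nbhs x (proj k @^-1` [set x k] : set cantor_space).
  by apply: (@proj_continuous nat (fun=> bool) k x).
apply: filterS (filterI IH xk) => y [xy yk] i.
by rewrite ltnS leq_eqVlt => /predU1P[->|/xy].
Qed.

Lemma nbhs_cylinder [x U] : nbhs x U -> exists k, cylinder x k `<=` U.
Proof.
pose F := filter_from [set: nat] (cylinder x).
have F_filter : Filter F.
  apply: filter_from_filter; first by exists 0%N.
  move=> i j _ _; exists (maxn i j) => //; rewrite subsetI.
  by split; apply: cylinderS; [exact: leq_maxl | exact: leq_maxr].
suff /(_ U) FU : F --> x by move=> /FU[k _ xkU]; exists k.
(* the product topology is the supremum of the topologies induced by the
   projections *)
apply/cvg_sup => i A; rewrite nbhsE => -[B [[V _ VB] Bx] BA].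
exists i.+1 => // y xy; apply: BA; rewrite -VB /= (xy i (ltnSn i)).
by move: Bx; rewrite -VB.
Qed.

Lemma nowhere_dense_cylinder [F : set cantor_space] x k : nowhere_dense F ->
  exists y k', (k < k')%N /\ cylinder y k' `<=` cylinder x k `&` ~` F.
Proof.
move=> ndF; have [y [xky nclFy]] : exists y, cylinder x k y /\ ~ closure F y.
  apply: contrapT => noy; suff : (closure F)° x by rewrite ndF.
  apply: filterS (cylinder_nbhs x k) => y xky.
  by apply: contrapT => nclFy; apply: noy; exists y.
have [j yjF] : exists j, cylinder y j `<=` ~` closure F.
  apply: nbhs_cylinder; apply: open_nbhs_nbhs; split => //.
  by rewrite openC; exact: closed_closure.
exists y, (maxn j k.+1); split; first by rewrite leq_max ltnSn orbT.
move=> z yz; split.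
  by apply: cylinder_sub xky _ _ yz; rewrite leq_max leqnSn orbT.
move=> Fz; apply: (yjF z (cylinderS (leq_maxl _ _) _ yz)).
exact: subset_closure.
Qed.

Lemma nested_cylinders_meet (x : nat -> cantor_space) (k : nat -> nat) :
  (forall n, (k n < k n.+1)%N) ->
  (forall n, cylinder (x n.+1) (k n.+1) `<=` cylinder (x n) (k n)) ->
  \bigcap_n cylinder (x n) (k n) !=set0.
Proof.
move=> k_incr nested.
have k_ge n : (n <= k n)%N.
  by elim: n => // n IH; exact: leq_ltn_trans IH (k_incr n).
have nestedW n m : (n <= m)%N -> cylinder (x m) (k m) `<=` cylinder (x n) (k n).
  apply: (@homo_leq _ (fun n => cylinder (x n) (k n)) (fun A B => B `<=` A)).
  - exact: subset_refl.
  - by move=> B A C BA CB; exact: subset_trans CB BA.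
  - exact: nested.
(* coordinate i is fixed from stage i.+1 on, since i < k i.+1 *)
exists (fun i => x i.+1 i) => n _ i ikn.
have [le_ni|lt_in] := leqP n i.+1.
  exact: (nestedW _ _ le_ni (x i.+1) (fun _ _ => erefl) i ikn).
by apply/esym/(nestedW _ _ (ltnW lt_in)) => //; exact: k_ge.
Qed.

Theorem cantor_baire [M : set cantor_space] : meager M -> dense (~` M).
Proof.
move=> [F [ndF MF]] O [x Ox] oO.
have [k xkO] := nbhs_cylinder (open_nbhs_nbhs (conj oO Ox)).
have shrink n (p : cantor_space * nat) : {q : cantor_space * nat |
    (p.2 < q.2)%N /\ cylinder q.1 q.2 `<=` cylinder p.1 p.2 `&` ~` F n}.
  apply: cid; have [y [k' ?]] := nowhere_dense_cylinder p.1 p.2 (ndF n).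
  by exists (y, k').
pose fix c n : cantor_space * nat :=
  if n is m.+1 then sval (shrink m (c m)) else (x, k).
have c_shrink n := svalP (shrink n (c n)).
have [z cz] : \bigcap_n cylinder (c n).1 (c n).2 !=set0.
  apply: nested_cylinders_meet => n; first by have [] := c_shrink n.
  by move=> y /(c_shrink n).2[].
exists z; split; first exact/xkO/(cz 0%N).
by move=> /MF[n _ Fz]; apply: ((c_shrink n).2 z (cz n.+1 I)).2.
Qed.

Definition toggle (n : nat) (x : cantor_space) : cantor_space :=
  fun m => if m == n then ~~ x m else x m.

Lemma toggle_eq n x : toggle n x n = ~~ x n.
Proof. by rewrite /toggle eqxx. Qed.

Lemma toggle_neq n x [m] : m <> n -> toggle n x m = x m.
Proof. by rewrite /toggle => /eqP/negPf->. Qed.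

Lemma toggleK n : involutive (toggle n).
Proof.
move=> x; apply: funext => m; rewrite /toggle.
by case: eqP => // _; rewrite negbK.
Qed.

Lemma cylinder_toggle n x k : (k <= n)%N -> cylinder x k (toggle n x).
Proof.
by move=> kn i ik; rewrite toggle_neq // => ein; rewrite ein ltnNge kn in ik.
Qed.

Lemma toggle_continuous n : continuous (toggle n).
Proof.
move=> x V /nbhs_cylinder[k xkV]; apply: filterS (cylinder_nbhs x k) => y xy.
by apply: xkV => i ik; rewrite /toggle xy.
Qed.

Lemma meager_toggle n [A : set cantor_space] :
  meager A -> meager (toggle n @^-1` A).
Proof.
exact: (meager_preimage (toggle_continuous n) (toggle_continuous n)
  (toggleK n) (toggleK n)).
Qed.

Lemma eq_off_toggle n x y :
  (forall m, m <> n -> y m = x m) -> y = x \/ y = toggle n x.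
Proof.
move=> yx; have [e|ne] := eqVneq (y n) (x n).
  by left; apply: funext => m; have [->|/eqP/yx] := eqVneq m n.
right; apply: funext => m; have [->|/eqP mn] := eqVneq m n.
  by rewrite toggle_eq; move: ne; case: (y n); case: (x n).
by rewrite toggle_neq // yx.
Qed.

Lemma thin_toggle [X n x] : thin X -> X x -> ~ X (toggle n x).
Proof.
move=> thinX Xx Xtx.
have off_n m : m <> n -> x m = toggle n x m by move=> /toggle_neq->.
have /(congr1 (fun y => y n)) := thinX n x _ Xx Xtx off_n.
by rewrite toggle_eq; case: (x n).
Qed.

Lemma maximal_thin_cover [X] : maximal_thin X ->
  [set: cantor_space] `<=` X `|` \bigcup_n (toggle n @^-1` X).
Proof.
move=> [thinX maxX] x _; have [Xx|nXx] := pselect (X x); [by left | right].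
apply: contrapT => ntX.
have far c n : X c -> ~ (forall m, m <> n -> c m = x m).
  move=> Xc /eq_off_toggle[cx|cx]; first by apply: nXx; rewrite -cx.
  by apply: ntX; exists n => //; rewrite /= -cx.
have thinXx : thin (X `|` [set x]).
  move=> n a b [Xa|->] [Xb|->] ab; first exact: thinX ab.
  - by case: (far a n Xa ab).
  - by case: (far b n Xb) => m /ab.
  - by [].
by apply: nXx; rewrite -(maxX _ thinXx (@subsetUl _ X [set x])); right.
Qed.

Theorem corollary10 (X : set cantor_space) :
  maximal_thin X -> ~ borel X /\ ~ meager X.
Proof.
move=> maxX.
have nmX : ~ meager X.
  move=> mX; have mT : meager [set: cantor_space].
    apply: meagerS (maximal_thin_cover maxX) (meagerU mX _).
    by apply: meager_bigcup => n; exact: meager_toggle.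
  by have [z [_ /(_ I)]] := cantor_baire mT setT (ex_intro _ point I) openT.
split=> // /borel_baire_property[U [oU mXU]].
have [[x Ux]|U0] := pselect (U !=set0); last first.
  apply/nmX/(meagerS _ mXU) => z Xz; left; split => // Uz.
  by apply: U0; exists z.
have [k xkU] := nbhs_cylinder (open_nbhs_nbhs (conj oU Ux)).
pose O := U `&` toggle k @^-1` U.
have oO : open O.
  by apply: openI => //; exact: (continuousP _).1 (toggle_continuous k) _ oU.
have Ox : O x by split => //; apply: xkU; exact: cylinder_toggle.
have [z [[Uz Utz] /not_orP[nXUz nXUtz]]] :=
  cantor_baire (meagerU mXU (meager_toggle k mXU)) O (ex_intro _ x Ox) oO.
have Xz : X z by apply: contrapT => nXz; apply: nXUz; right.
have Xtz : X (toggle k z) by apply: contrapT => nXtz; apply: nXUtz; right.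
exact: thin_toggle maxX.1 Xz Xtz.
Qed.
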